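(* Let $(\lambda_n)_{n\ge0}$ be an increasing sequence of non-negative real numbers tending to infinity and let $(c_n)_{n\ge0}$ be complex numbers satisfying $$\sum_{\lambda_n\le x}\lambda_n|c_n|=O(x)\quad(x\to\infty).$$ Then $\sum_{n=0}^\infty c_n$ is $(\mathrm{L},\{\lambda_n\})$ summable (to $\ell$) if and only if it is $(\gamma,\{\lambda_n\},1)$ summable (to $\ell$).
   Context: Let $\gamma_1(x)=\frac{\sin x}{x}$ ($\gamma_1(0)=1$). The series $\sum c_n$ is $(\gamma,\{\lambda_n\},1)$ summable to $\ell$ if $\sum_{n=0}^\infty c_n\gamma_1(\lambda_nh)$ converges for all sufficiently small $h>0$ and $\lim_{h\to0^+}\sum_{n=0}^\infty c_n\gamma_1(\lambda_nh)=\ell$. It is $(\mathrm{L},\{\lambda_n\})$ summable to $\ell$ if it is $(\gamma,\{\lambda_n\},1)$ summable to $\ell$ and in addition $\sum_{\lambda_n>0}c_n\frac{e^{i\lambda_nh}}{\lambda_nh}$ converges for all sufficiently small $|h|>0$. *)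

From Stdlib Require Import Reals.
From Coquelicot Require Import Coquelicot.
Open Scope R_scope.

(* sum of a convergent complex series, computed componentwise
   (Coquelicot's [Series] is real-valued) *)
Definition CSeries (a : nat -> C) : C :=
  (Series (fun n => fst (a n)), Series (fun n => snd (a n))).

Definition Cex_series (a : nat -> C) : Prop := @ex_series _ C_R_NormedModule a.

Definition gamma1 (x : R) : R := if Req_EM_T x 0 then 1 else sin x / x.

Definition gamma_term (lam : nat -> R) (c : nat -> C) (h : R) (n : nat) : C :=
  Cmult (c n) (RtoC (gamma1 (lam n * h))).

Definition gamma_summable (lam : nat -> R) (c : nat -> C) (l : C) : Prop :=
  (exists delta : R, 0 < delta /\
     forall h : R, 0 < h < delta -> Cex_series (gamma_term lam c h)) /\
  filterlim (fun h : R => CSeries (gamma_term lam c h)) (at_right 0) (locally l).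

Definition L_term (lam : nat -> R) (c : nat -> C) (h : R) (n : nat) : C :=
  if Rlt_dec 0 (lam n)
  then Cmult (c n) (Cdiv (cos (lam n * h), sin (lam n * h)) (RtoC (lam n * h)))
  else RtoC 0.

Definition L_summable (lam : nat -> R) (c : nat -> C) (l : C) : Prop :=
  gamma_summable lam c l /\
  (exists delta : R, 0 < delta /\
     forall h : R, 0 < Rabs h < delta -> Cex_series (L_term lam c h)).

Definition weighted_count (lam : nat -> R) (c : nat -> C) (x : R) (N : nat) : R :=
  sum_f_R0 (fun n => if Rle_dec (lam n) x then lam n * Cmod (c n) else 0) N.

(* The first half of [L_summable] is [gamma_summable], so only the convergence
   of [sum_{lambda_n > 0} c_n e^{i lambda_n h} / (lambda_n h)] for small [h <> 0]
   needs proof.  Its terms have modulus [|c_n| / (lambda_n |h|)], and the Tauberian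
   bound [sum_{lambda_n <= x} lambda_n |c_n| = O(x)] makes [sum |c_n| / lambda_n]
   converge by Abel summation: with [T_K = sum_{k <= K} lambda_k |c_k|] and
   [w_k = lambda_k^-2] decreasing,
   [sum_{k <= K} |c_k| / lambda_k = T_K w_K + sum_{k < K} T_k (w_k - w_(k+1))],
   and each [T_k (w_k - w_(k+1)) <= 2 M (1/lambda_k - 1/lambda_(k+1))] telescopes. *)
From Stdlib Require Import Reals Lra Lia Psatz.
From Coquelicot Require Import Coquelicot.
Open Scope R_scope.

Lemma sum_f_R0_shift_le (f : nat -> R) (n0 K : nat) :
  (forall n, 0 <= f n) ->
  sum_f_R0 (fun k => f (n0 + k)%nat) K <= sum_f_R0 f (n0 + K).
Proof.
  intros f_ge0; induction K as [|K IHK].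
  - simpl; rewrite Nat.add_0_r; destruct n0 as [|n0]; simpl; [lra|].
    pose proof (cond_pos_sum f n0 f_ge0); lra.
  - rewrite Nat.add_succ_r; simpl; rewrite Nat.add_succ_r; lra.
Qed.

Lemma incr_seq_le (u : nat -> R) :
  (forall k, u k < u (S k)) -> forall m n, (m <= n)%nat -> u m <= u n.
Proof.
  intros u_incr m n Hmn; induction Hmn as [|n _ IH]; [lra|].
  pose proof (u_incr n); lra.
Qed.

Lemma inv_sqr_diff_le (T M p q : R) :
  0 <= T -> 0 < q < p -> T * p <= M ->
  T * (p * p - q * q) <= 2 * M * (p - q).
Proof.
  intros T_ge0 [q_gt0 q_lt_p] Tp_le.
  replace (T * (p * p - q * q)) with ((T * p + T * q) * (p - q)) by ring.
  apply Rmult_le_compat_r; nra.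
Qed.

Section AbelSummation.

Variables (u b : nat -> R) (M : R).
Hypothesis u_gt0 : forall k, 0 < u k.
Hypothesis u_incr : forall k, u k < u (S k).
Hypothesis b_ge0 : forall k, 0 <= b k.

Let T (K : nat) : R := sum_f_R0 (fun k => u k * b k) K.

Hypothesis T_le : forall K, T K <= M * u K.

Let T_ge0 (K : nat) : 0 <= T K.
Proof.
  apply cond_pos_sum; intro k.
  pose proof (u_gt0 k); pose proof (b_ge0 k); nra.
Qed.

Let T_div_le (K : nat) : T K * / u K <= M.
Proof.
  pose proof (u_gt0 K); pose proof (T_le K).
  apply (Rmult_le_reg_r (u K)); [lra|].
  rewrite Rmult_assoc, Rinv_l by lra; lra.
Qed.

Lemma abel_sum_div_le (K : nat) :
  sum_f_R0 (fun k => b k / u k) K <=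
  T K * (/ u K * / u K) + 2 * M * (/ u 0%nat - / u K).
Proof.
  induction K as [|K IHK]; simpl.
  - pose proof (u_gt0 0%nat).
    change (T 0%nat) with (u 0%nat * b 0%nat).
    replace (u 0%nat * b 0%nat * (/ u 0%nat * / u 0%nat))
      with (b 0%nat / u 0%nat) by (field; lra).
    lra.
  - change (T (S K)) with (T K + u (S K) * b (S K)).
    pose proof (u_gt0 K); pose proof (u_gt0 (S K)); pose proof (u_incr K).
    set (p := / u K) in *; set (q := / u (S K)).
    assert (q_lt_p : 0 < q < p).
    { split; [apply Rinv_0_lt_compat; lra|apply Rinv_lt_contravar; nra]. }
    assert (Hbq : b (S K) / u (S K) = u (S K) * b (S K) * (q * q))
      by (unfold q; field; lra).
    pose proof (inv_sqr_diff_le (T K) M p q (T_ge0 K) q_lt_p (T_div_le K)).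
    rewrite Hbq, Rmult_plus_distr_r.
    replace (T K * (p * p)) with (T K * (q * q) + T K * (p * p - q * q)) in IHK
      by ring.
    lra.
Qed.

Lemma sum_div_le (K : nat) : sum_f_R0 (fun k => b k / u k) K <= 3 * M / u 0%nat.
Proof.
  pose proof (u_gt0 0%nat); pose proof (u_gt0 K).
  pose proof (incr_seq_le u u_incr 0 K (Nat.le_0_l K)).
  assert (inv_le : 0 < / u K <= / u 0%nat).
  { split; [apply Rinv_0_lt_compat|apply Rinv_le_contravar]; lra. }
  assert (M_ge0 : 0 <= M) by (pose proof (T_div_le K); pose proof (T_ge0 K); nra).
  assert (T K * (/ u K * / u K) <= M * / u 0%nat).
  { rewrite <- Rmult_assoc; pose proof (T_div_le K);
      pose proof (T_ge0 K); nra. }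
  pose proof (abel_sum_div_le K); unfold Rdiv; nra.
Qed.

Lemma ex_series_div : ex_series (fun k => b k / u k).
Proof.
  destruct (ex_finite_lim_seq_incr (sum_n (fun k => b k / u k)) (3 * M / u 0%nat))
    as [l Hl].
  - intro n; rewrite !sum_n_Reals; simpl.
    pose proof (Rdiv_le_0_compat _ _ (b_ge0 (S n)) (u_gt0 (S n))); lra.
  - intro n; rewrite sum_n_Reals; apply sum_div_le.
  - exists l; exact Hl.
Qed.

End AbelSummation.

Lemma tail_weighted_sum_le_weighted_count (lam : nat -> R) (c : nat -> C) (n0 K : nat) :
  (forall n, 0 <= lam n) -> (forall n, lam n < lam (S n)) ->
  sum_f_R0 (fun k => lam (n0 + k)%nat * Cmod (c (n0 + k)%nat)) K <=
  weighted_count lam c (lam (n0 + K)%nat) (n0 + K).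
Proof.
  intros lam_ge0 lam_incr.
  eapply Rle_trans; [|apply sum_f_R0_shift_le].
  - right; apply sum_eq; intros k Hk.
    destruct (Rle_dec _ _) as [_|Hn]; [reflexivity|].
    exfalso; apply Hn, (incr_seq_le lam lam_incr); lia.
  - intro n; destruct (Rle_dec _ _); [|lra].
    apply Rmult_le_pos; [apply lam_ge0|apply Cmod_ge_0].
Qed.

Lemma ex_series_Cmod_div_lam (lam : nat -> R) (c : nat -> C) :
  (forall n : nat, 0 <= lam n) ->
  (forall n : nat, lam n < lam (S n)) ->
  is_lim_seq lam p_infty ->
  (exists M X : R, forall x : R, X <= x ->
     forall N : nat, weighted_count lam c x N <= M * x) ->
  ex_series (fun n => if Rlt_dec 0 (lam n) then Cmod (c n) / lam n else 0).
Proof.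
  intros lam_ge0 lam_incr lam_lim [M [X HM]].
  apply is_lim_seq_spec in lam_lim; destruct (lam_lim (Rmax X 0)) as [n0 Hn0].
  assert (lam_big : forall k, Rmax X 0 < lam (n0 + k)%nat) by (intro; apply Hn0; lia).
  pose proof (Rmax_l X 0); pose proof (Rmax_r X 0).
  apply (ex_series_incr_n _ n0).
  apply (ex_series_ext (fun k => Cmod (c (n0 + k)%nat) / lam (n0 + k)%nat)).
  { intro k; destruct (Rlt_dec _ _) as [_|Hn]; [reflexivity|].
    specialize (lam_big k); lra. }
  apply (ex_series_div (fun k => lam (n0 + k)%nat) _ M).
  - intro k; specialize (lam_big k); lra.
  - intro k; rewrite Nat.add_succ_r; apply lam_incr.
  - intro; apply Cmod_ge_0.
  - intro K; eapply Rle_trans; [apply tail_weighted_sum_le_weighted_count; assumption|].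
    apply HM; specialize (lam_big K); lra.
Qed.

Lemma Cmod_cos_sin (t : R) : Cmod (cos t, sin t) = 1.
Proof.
  unfold Cmod; simpl; pose proof (sin2_cos2 t); unfold Rsqr in *.
  replace (cos t * (cos t * 1) + sin t * (sin t * 1)) with 1 by lra.
  apply sqrt_1.
Qed.

Lemma Cmod_L_term (lam : nat -> R) (c : nat -> C) (h : R) (n : nat) :
  h <> 0 ->
  Cmod (L_term lam c h n) =
  (if Rlt_dec 0 (lam n) then Cmod (c n) / lam n else 0) / Rabs h.
Proof.
  intros h_neq0; unfold L_term.
  destruct (Rlt_dec 0 (lam n)) as [lam_gt0|_].
  - rewrite Cmod_mult, Cmod_div, Cmod_cos_sin, Cmod_R, Rabs_mult,
      (Rabs_right (lam n)) by (try lra; intro E; apply (f_equal fst) in E;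
                               simpl in E; nra).
    assert (0 < Rabs h) by (apply Rabs_pos_lt, h_neq0).
    field; lra.
  - rewrite Cmod_R, Rabs_R0; unfold Rdiv; ring.
Qed.

Theorem proposition2p1 (lam : nat -> R) (c : nat -> C) :
  (forall n : nat, 0 <= lam n) ->
  (forall n : nat, lam n < lam (S n)) ->
  is_lim_seq lam p_infty ->
  (exists M X : R, forall x : R, X <= x ->
     forall N : nat, weighted_count lam c x N <= M * x) ->
  forall l : C, L_summable lam c l <-> gamma_summable lam c l.
Proof.
  intros lam_ge0 lam_incr lam_lim weighted_bound l.
  split; [intros [Hgamma _]; exact Hgamma|intros Hgamma; split; [exact Hgamma|]].
  exists 1; split; [lra|]; intros h Hh.
  assert (h_neq0 : h <> 0) by (intro E; subst; rewrite Rabs_R0 in Hh; lra).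
  apply (ex_series_le (K := R_AbsRing) (V := C_R_CompleteNormedModule) _
    (fun n => (if Rlt_dec 0 (lam n) then Cmod (c n) / lam n else 0) / Rabs h)).
  - intro n; rewrite <- Cmod_norm, Cmod_L_term by exact h_neq0; lra.
  - apply ex_series_scal_r.
    exact (ex_series_Cmod_div_lam lam c lam_ge0 lam_incr lam_lim weighted_bound).
Qed.
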